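(* Let $G$ be a finite group, $\Lambda$ an absolutely irreducible $\mathbb Z[G]$-module of finite rank, $W=\Lambda\otimes\mathbb Q$, $w$ a weight with associated form $(\,,\,)$, $H=\mathrm{Stab}_G(w)$, $d=[G:H]$, and let $\pi:X\to\mathbb P^1$ be a Galois covering with group $G$, $C=X/H$, $\varphi:X\to C$ the quotient map. Let $\{g_1,\dots,g_d\}$ be any set of representatives of the left cosets of $H$ in $G$. Then for every $x\in X$ and $c=\varphi(x)$, $$\overline S_w(c)=|H|^2\sum_{i=1}^d(w,g_iw)\,\varphi(g_i^{-1}(x)).$$
   Context: A weight of $\Lambda$ is $w\in W$ with $gw-w\in\Lambda$ for all $g\in G$. $(\,,\,)$ is the negative definite $G$-invariant symmetric bilinear form on $W$ such that (i) $(w,\lambda)\in\mathbb Z$ for all $\lambda\in\Lambda$, and (ii) every $G$-invariant symmetric bilinear form satisfying (i) is an integer multiple of it. $H=\{g\in G:gw=w\}$. $X$ is a smooth projective complex curve with faithful $G$-action and $X/G\cong\mathbb P^1$. With $\Gamma_g\subset X\times X$ the graph of $g$, $S_w=\sum_{g\in G}(w,gw)\Gamma_g$ (so $S_w(x)=\sum_g(w,gw)g(x)$), and $\overline S_w=(\varphi\times\varphi)_*S_w$ is the induced correspondence on $C$. *)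

From HB Require Import structures.
From mathcomp Require Import all_boot all_order all_algebra all_fingroup all_solvable all_field all_character.
Set Implicit Arguments. Unset Strict Implicit. Unset Printing Implicit Defensive.
Import Order.TTheory GRing.Theory Num.Theory.
Local Open Scope ring_scope.
Local Open Scope group_scope.

(* Lattice Lambda = Z^n (row vectors) inside W = Q^n, G acting through a
   rational matrix representation rG with integral entries.  mathcomp's
   representations act on the right (v *m rG g); the left action is
   g . v := v *m rG g^-1. *)

Section Lattice.
Variables (gT : finGroupType) (G : {group gT}) (n : nat).
Variable rG : mx_representation rat G n.

Definition is_int_rV (v : 'rV[rat]_n) : Prop := forall j, v 0 j \is a Num.int.

Definition int_repr : Prop :=
  forall g, g \in G -> forall i j, rG g i j \is a Num.int.

Definition wact (g : gT) (v : 'rV[rat]_n) : 'rV[rat]_n := v *m rG g^-1.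

Definition bform (B : 'M[rat]_n) (u v : 'rV[rat]_n) : rat := (u *m B *m v^T)%R 0 0.

Definition is_weight (w : 'rV[rat]_n) : Prop :=
  forall g, g \in G -> is_int_rV (wact g w - w)%R.

Definition form_invariant (B : 'M[rat]_n) : Prop :=
  forall g u v, g \in G -> bform B (wact g u) (wact g v) = bform B u v.

Definition form_symmetric (B : 'M[rat]_n) : Prop := B^T = B.

Definition form_neg_definite (B : 'M[rat]_n) : Prop :=
  forall v : 'rV[rat]_n, v != 0 -> (bform B v v < 0)%R.

Definition form_int_on_w (w : 'rV[rat]_n) (B : 'M[rat]_n) : Prop :=
  forall l, is_int_rV l -> bform B w l \is a Num.int.

(* The form (,) associated to the weight w: negative definite, G-invariant,
   symmetric, (i) integral on (w, Lambda), (ii) generating all such forms. *)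
Definition assoc_form (w : 'rV[rat]_n) (B : 'M[rat]_n) : Prop :=
  [/\ form_neg_definite B, form_invariant B, form_symmetric B,
      form_int_on_w w B &
      forall B', form_invariant B' -> form_symmetric B' -> form_int_on_w w B' ->
        exists k : int, B' = (k%:~R *: B)%R].

Definition wstab (w : 'rV[rat]_n) : {set gT} := [set g in G | wact g w == w].

End Lattice.

(* Points and divisors (formal finite Q-linear combinations of points). *)
Section Divisors.
Variables (gT : finGroupType) (X C : eqType).

Definition divisor (T : eqType) := seq (T * rat).

Definition dcoef (T : eqType) (D : divisor T) (t : T) : rat :=
  (\sum_(p <- D) (p.1 == t)%:R * p.2)%R.

Definition dpush (phi : X -> C) (D : divisor X) : divisor C :=
  [seq (phi p.1, p.2) | p <- D].

(* action of the correspondence sum_{g in A} n_g Gamma_g on a divisor of X *)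
Definition corr_apply (act : gT -> X -> X) (ng : gT -> rat) (A : {set gT})
  (D : divisor X) : divisor X :=
  [seq (act gp.1 gp.2.1, (ng gp.1 * gp.2.2)%R) | gp <- [seq (g, p) | g <- enum A, p <- D]].

Definition pt_action (G : {set gT}) (act : gT -> X -> X) : Prop :=
  (forall x, act 1 x = x) /\
  (forall g h x, g \in G -> h \in G -> act (g * h) x = act g (act h x)).

Definition pt_faithful (G : {set gT}) (act : gT -> X -> X) : Prop :=
  forall g, g \in G -> (forall x, act g x = x) -> g = 1.

(* point stabilizer of y in H = ramification index of X -> X/H at y *)
Definition ram_index (act : gT -> X -> X) (H : {set gT}) (y : X) : nat :=
  #|[set h in H | act h y == y]|.

(* D is (a representative of) the pull-back divisor phi^*(c) for the
   quotient map phi : X -> X/H: each y over c with multiplicity e_y. *)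
Definition is_pullback (act : gT -> X -> X) (H : {set gT}) (phi : X -> C)
  (c : C) (D : divisor X) : Prop :=
  forall y, dcoef D y = if phi y == c then (ram_index act H y)%:R else 0%R.

End Divisors.

From HB Require Import structures.
From mathcomp Require Import all_boot all_order all_algebra all_fingroup all_solvable all_field all_character.
Set Implicit Arguments. Unset Strict Implicit. Unset Printing Implicit Defensive.
Import Order.TTheory GRing.Theory Num.Theory.
Local Open Scope ring_scope.

(* Pulling back c = phi x to X gives the H-orbit of x, each point y counted
   with its ramification index; summed over the orbit this is the sum over h
   in H of the points h x.  Hence S_w(phi^* c) = sum_{g in G, h in H}
   (w, g w) g h x, and since (w, g w) is constant on left cosets of H and
   invariant under g |-> g^-1, regrouping g h into cosets and inverting
   produces the factor |H|^2 in front of the sum over coset representatives. *)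

Section DivisorSums.
Variable T : eqType.
Implicit Types (D : divisor T) (t : T).

Lemma dcoef_neq0_mem D t : dcoef D t != 0 -> t \in unzip1 D.
Proof.
apply: contraR => tD; rewrite /dcoef big_seq big1 // => p pD.
case: eqP => [e | _]; last by rewrite mul0r.
by case/negP: tD; rewrite -e map_f.
Qed.

Lemma big_divisor_dcoef D (f : T -> rat) :
  \sum_(p <- D) f p.1 * p.2 = \sum_(t <- undup (unzip1 D)) f t * dcoef D t.
Proof.
rewrite /dcoef; under [RHS]eq_bigr => t _ do rewrite mulr_sumr.
rewrite exchange_big /= big_seq [RHS]big_seq; apply: eq_bigr => p pD.
rewrite (bigD1_seq p.1) ?undup_uniq ?mem_undup ?map_f //= eqxx mul1r.
by rewrite big1 ?addr0 // => t; rewrite eq_sym => /negbTE ->; rewrite mul0r mulr0.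
Qed.

End DivisorSums.

Lemma dcoef_push_corr (gT : finGroupType) (X C : eqType) (act : gT -> X -> X)
    (phi : X -> C) (ng : gT -> rat) (A : {set gT}) (D : divisor X) (c : C) :
  dcoef (dpush phi (corr_apply act ng A D)) c
  = \sum_(g in A) \sum_(p <- D) (phi (act g p.1) == c)%:R * ng g * p.2.
Proof.
rewrite /dcoef /dpush /corr_apply !big_map big_allpairs big_enum.
by apply: eq_bigr => g _; apply: eq_bigr => p _; rewrite mulrA.
Qed.

Section OrbitSums.
Variables (gT : finGroupType) (H : {group gT}) (X : eqType) (act : gT -> X -> X).
Variable x : X.

Lemma sum_orbit_fibres (s : seq X) (f : X -> rat) :
  uniq s -> (forall h, h \in H -> act h x \in s) ->
  \sum_(h in H) f (act h x) = \sum_(y <- s) f y * #|[set h in H | act h x == y]|%:R.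
Proof.
move=> us sHx.
transitivity (\sum_(h in H) \sum_(y <- s) (act h x == y)%:R * f y).
  apply: eq_bigr => h hH; rewrite (bigD1_seq (act h x)) ?sHx //= eqxx mul1r.
  by rewrite big1 ?addr0 // => y; rewrite eq_sym => /negbTE ->; rewrite mul0r.
rewrite exchange_big; apply: eq_bigr => y _; rewrite -mulr_suml mulrC -sum1_card.
rewrite natr_sum; congr (_ * _); rewrite big_mkcond [RHS]big_mkcond; apply: eq_bigr => h _.
by rewrite inE; case: (h \in H); case: (_ == _).
Qed.

Hypothesis actH : pt_action H act.

Lemma card_orbit_fibre h0 :
  h0 \in H -> #|[set h in H | act h x == act h0 x]| = ram_index act H (act h0 x).
Proof.
have [_ actM] := actH; move=> h0H; rewrite /ram_index -(card_rcoset _ h0).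
apply: eq_card => h; rewrite mem_rcoset !inE groupMr ?groupV //.
case hH: (h \in H) => //=.
by rewrite -!actM ?groupM ?groupV // mulgKV.
Qed.

Lemma pullback_sum (C : eqType) (phi : X -> C) (D : divisor X) (f : X -> rat) :
  (forall y z : X, phi y = phi z <-> exists2 h, h \in H & z = act h y) ->
  is_pullback act H phi (phi x) D ->
  \sum_(p <- D) f p.1 * p.2 = \sum_(h in H) f (act h x).
Proof.
have [act1 _] := actH; move=> orbit pb.
have phi_orbit h : h \in H -> phi (act h x) = phi x.
  by move=> hH; symmetry; apply/orbit; exists h.
have orbit_supp h : h \in H -> act h x \in undup (unzip1 D).
  move=> hH; rewrite mem_undup; apply: dcoef_neq0_mem.
  rewrite pb phi_orbit // eqxx pnatr_eq0 -lt0n; apply/card_gt0P; exists 1%g.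
  by rewrite !inE group1 act1 eqxx.
rewrite big_divisor_dcoef (sum_orbit_fibres _ (undup_uniq _) orbit_supp).
apply: eq_bigr => y _; rewrite pb; case: eqP => [/esym/orbit [h hH ->] | phiy].
  by rewrite card_orbit_fibre.
suff -> : [set h in H | act h x == y] = set0 by rewrite cards0.
apply/setP => h; rewrite !inE; apply/negbTE/andP => -[hH /eqP hy].
by apply: phiy; apply/esym/orbit; exists h.
Qed.

End OrbitSums.

Lemma pt_actionS (gT : finGroupType) (G H : {set gT}) (X : eqType) (act : gT -> X -> X) :
  H \subset G -> pt_action G act -> pt_action H act.
Proof. by move=> /subsetP sHG [act1 actM]; split=> // g h y /sHG gG /sHG hG; apply: actM. Qed.

Section Transversal.
Variables (gT : finGroupType) (G H : {group gT}) (r : seq gT).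
Hypothesis sHG : H \subset G.
Hypothesis r_transversal : perm_eq [seq (g *: H)%g | g <- r] (enum (lcosets H G)).

Lemma transversal_memG g : g \in r -> g \in G.
Proof.
move=> gr; have : (g *: H)%g \in lcosets H G.
  by rewrite -mem_enum -(perm_mem r_transversal); apply: map_f.
case/lcosetsP => g' g'G e; have : g \in (g' *: H)%g by rewrite -e lcoset_refl.
by case/lcosetP => h hH ->; rewrite groupM // (subsetP sHG).
Qed.

Lemma big_lcosets_transversal (R : nmodType) (F : gT -> R) :
  \sum_(k in G) F k = \sum_(g <- r) \sum_(h in H) F (g * h)%g.
Proof.
have lcosets_triv : trivIset (lcosets H G).
  apply/trivIsetP => _ _ /lcosetsP [a aG ->] /lcosetsP [b bG ->] neq.
  apply/pred0P => z /=; apply/negP => /andP [za zb].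
  by case/negP: neq; rewrite -(lcoset_eqP za) -(lcoset_eqP zb).
have lcosets_cover : cover (lcosets H G) = G.
  apply/setP => z; apply/bigcupP/idP.
    by case=> _ /lcosetsP [a aG ->] /lcosetP [h hH ->]; rewrite groupM // (subsetP sHG).
  by move=> zG; exists (z *: H)%g; [apply/lcosetsP; exists z | rewrite lcoset_refl].
rewrite -{1}lcosets_cover big_trivIset // -big_enum -(perm_big _ r_transversal) big_map.
apply: eq_bigr => g _; rewrite (reindex_inj (mulgI g)); apply: eq_bigl => h.
by rewrite mem_lcoset mulKg.
Qed.

Lemma big_lcoset_const (R : nmodType) (F : gT -> R) :
  (forall g h, g \in G -> h \in H -> F (g * h)%g = F g) ->
  \sum_(k in G) F k = \sum_(g <- r) F g *+ #|H|.
Proof.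
move=> Fconst; rewrite big_lcosets_transversal big_seq [RHS]big_seq.
apply: eq_bigr => g gr; rewrite -sumr_const.
by apply: eq_bigr => h hH; rewrite Fconst ?transversal_memG.
Qed.

End Transversal.

Lemma bform_sym n (B : 'M[rat]_n) u v : B^T = B -> bform B u v = bform B v u.
Proof.
move=> sB; rewrite /bform.
have -> : u *m B *m v^T = (v *m B *m u^T)^T by rewrite !trmx_mul trmxK sB mulmxA.
by rewrite mxE.
Qed.

Section WeightCoefficients.
Variables (gT : finGroupType) (G H : {group gT}) (n : nat).
Variables (rG : mx_representation rat G n) (w : 'rV[rat]_n) (B : 'M[rat]_n).
Hypothesis sHG : H \subset G.
Hypothesis H_stab : H :=: wstab rG w.
Hypothesis B_inv : form_invariant rG B.
Hypothesis B_sym : form_symmetric B.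

Definition wcoef (g : gT) : rat := bform B w (wact rG g w).

Lemma wcoefMr g h : g \in G -> h \in H -> wcoef (g * h)%g = wcoef g.
Proof.
move=> gG hH; have hG := subsetP sHG h hH.
have : h \in wstab rG w by rewrite -H_stab.
rewrite inE => /andP [_ /eqP hw].
by rewrite /wcoef /wact invMg repr_mxM ?groupV // mulmxA -/(wact rG h w) hw.
Qed.

Lemma wcoefV g : g \in G -> wcoef g^-1 = wcoef g.
Proof.
move=> gG; rewrite /wcoef bform_sym // -(B_inv (wact rG g^-1 w) w gG).
by rewrite /wact invgK -mulmxA -repr_mxM ?groupV // mulgV repr_mx1 mulmx1.
Qed.

End WeightCoefficients.

Theorem proposition2p2 (gT : finGroupType) (G H : {group gT}) (n : nat)
  (rG : mx_representation rat G n) (w : 'rV[rat]_n) (B : 'M[rat]_n)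
  (X C : eqType) (act : gT -> X -> X) (phi : X -> C) (r : seq gT) :
  int_repr rG ->
  mx_absolutely_irreducible rG ->
  is_weight rG w ->
  assoc_form rG w B ->
  H :=: wstab rG w ->
  pt_action G act ->
  pt_faithful G act ->
  (forall c : C, exists x : X, phi x = c) ->
  (forall x y : X, phi x = phi y <-> exists2 h, h \in H & y = act h x) ->
  perm_eq [seq (g *: H)%g | g <- r] (enum (lcosets H G)) ->
  forall (x : X) (D : divisor X),
    is_pullback act H phi (phi x) D ->
    forall c' : C,
      dcoef (dpush phi (corr_apply act (fun g => bform B w (wact rG g w)) G D)) c'
      = dcoef [seq (phi (act (g^-1)%g x), (#|H| ^ 2)%:R * bform B w (wact rG g w))
             | g <- r] c'.
Proof.
move=> _ _ _ [_ B_inv B_sym _ _] H_stab actG _ _ orbit r_transversal x D pb c'.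
have sHG : H \subset G by rewrite H_stab; apply/subsetP => g; rewrite inE => /andP [].
have [_ actM] := actG.
pose F (k : gT) := (phi (act (k^-1)%g x) == c')%:R * wcoef rG w B k.
have F_lcoset g h : g \in G -> h \in H -> F (g * h)%g = F g.
  move=> gG hH; have hG := subsetP sHG h hH.
  rewrite /F (wcoefMr _ sHG H_stab) // invMg actM ?groupV //.
  by congr ((_ == _)%:R * _); symmetry; apply/orbit; exists (h^-1)%g; rewrite ?groupV.
transitivity (\sum_(g in G) \sum_(h in H) F ((g * h)^-1)%g).
  rewrite dcoef_push_corr; apply: eq_bigr => g gG.
  pose f y := (phi (act g y) == c')%:R * wcoef rG w B g.
  rewrite (pullback_sum (pt_actionS sHG actG) f orbit pb).
  apply: eq_bigr => h hH; have hG := subsetP sHG h hH.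
  by rewrite /F invgK (wcoefV _ B_inv B_sym) ?groupM // (wcoefMr _ sHG H_stab) // actM.
rewrite exchange_big /= (eq_bigr (fun=> \sum_(k in G) F k)) ?sumr_const; last first.
  move=> h hH; rewrite [RHS](reindex_inj invg_inj) [RHS](reindex_inj (mulIg h)).
  by apply: eq_bigl => k; rewrite /= groupV groupMr // (subsetP sHG h hH).
rewrite (big_lcoset_const sHG r_transversal F_lcoset) -sumrMnl /dcoef big_map.
by apply: eq_bigr => g _; rewrite /F /= -mulrnA mulnn [RHS]mulrCA !mulr_natl.
Qed.
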